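(* For every skew shape $\lambda/\mu$ and every $k$, there is a double weight preserving bijection from the set of primed tableaux of shape $\lambda/\mu$ over $X'_k$ to the set of signed tableaux of shape $\lambda/\mu$ over $\bar X_k$.
   Context: A primed tableau of shape $\lambda/\mu$ over $X'_k=\{1'<1<2'<2<\dots<k'<k\}$ is a filling of the skew diagram with rows and columns weakly increasing, at most one $i'$ in each row and at most one $i$ in each column for every $i$; its double weight is $(X,Y)$ where $X(i)$ is the number of entries $i'$ and $Y(i)$ the number of entries $i$. A signed tableau of shape $\lambda/\mu$ over $\bar X_k=\{\bar k<\dots<\bar1<1<\dots<k\}$ is a filling with rows and columns weakly increasing, at most one $\bar i$ in each row and at most one $i$ in each column for every $i$; its double weight is $(X,Y)$ where $X(i)$ is the number of entries $\bar i$ and $Y(i)$ the number of entries $i$. *)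

From mathcomp Require Import all_boot.
 Unset Strict Implicit. Unset Printing Implicit Defensive.

Definition is_partition (l : seq nat) : bool :=
  sorted geq l && all (fun x => 0 < x) l.

Definition subpart (mu lam : seq nat) : bool :=
  all (fun i => nth 0 mu i <= nth 0 lam i) (iota 0 (size mu)).

(* Cells of lam/mu: (i,j) (row i, column j, 0-based) with mu_i <= j < lam_i.
   Every such cell has i < size lam and j < lam_0. *)
Definition in_skew (lam mu : seq nat) (c : 'I_(size lam) * 'I_(nth 0 lam 0)) : bool :=
  (nth 0 mu c.1 <= c.2) && (c.2 < nth 0 lam c.1).

Definition cell (lam mu : seq nat) := {c : 'I_(size lam) * 'I_(nth 0 lam 0) | in_skew lam mu c}.


Definition row {lam mu : seq nat} (c : cell lam mu) : nat := (val c).1.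
Definition col {lam mu : seq nat} (c : cell lam mu) : nat := (val c).2.

(* Letters: (i, b) with i : 'I_k standing for the integer i+1.
   b = false : the marked letter  ((i+1)' in X'_k,  \bar{i+1} in \bar X_k);
   b = true  : the unmarked letter (i+1). *)
Definition letter (k : nat) := ('I_k * bool)%type.

(* Position of a letter in the total order of X'_k = {1' < 1 < 2' < 2 < ... < k' < k}. *)
Definition primed_key (k : nat) (l : letter k) : nat := 2 * l.1 + l.2.

(* Position of a letter in \bar X_k = {\bar k < ... < \bar 1 < 1 < ... < k}. *)
Definition signed_key (k : nat) (l : letter k) : nat :=
  if l.2 then k + l.1 else k - l.1.+1.

Definition filling (lam mu : seq nat) (k : nat) := {ffun cell lam mu -> letter k}.

Definition is_tableau {lam mu : seq nat} {k : nat} (key : letter k -> nat)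
  (t : filling lam mu k) : bool :=
  [forall c1 : cell lam mu, forall c2 : cell lam mu,
    [&& ((row c1 == row c2) && (col c1 <= col c2)) ==> (key (t c1) <= key (t c2)),
        ((col c1 == col c2) && (row c1 <= row c2)) ==> (key (t c1) <= key (t c2)),
        [&& c1 != c2, row c1 == row c2 & t c1 == t c2] ==> (t c1).2
      & [&& c1 != c2, col c1 == col c2 & t c1 == t c2] ==> ~~ (t c1).2]].

Definition primed_tab (lam mu : seq nat) (k : nat) :=
  {t : filling lam mu k | is_tableau (@primed_key k) t}.

Definition signed_tab (lam mu : seq nat) (k : nat) :=
  {t : filling lam mu k | is_tableau (@signed_key k) t}.

Definition dweight {lam mu : seq nat} {k : nat} (t : filling lam mu k) : {ffun 'I_k -> nat * nat} :=
  [ffun i => (#|[pred c | t c == (i, false)]|, #|[pred c | t c == (i, true)]|)].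

From mathcomp Require Import all_boot zify.
Set Implicit Arguments. Unset Strict Implicit. Unset Printing Implicit Defensive.

(* The primed order 1' < 1 < 2' < 2 < ... is turned into the signed order by moving,
   for m = 1, ..., k in turn, the letter m' down past the 2(m-1) letters below it, one
   at a time.  Each move exchanges two adjacent letters a < b with b marked, and for such
   an exchange the cells holding a or b form a region in which most entries are forced
   by the tableau conditions; re-arranging the letters inside this region gives a
   weight preserving bijection between the tableaux of the two orders. *)

(** * Skew shapes and tableaux *)

Lemma partition_nth_le (l : seq nat) (i j : nat) :
  is_partition l -> i <= j -> nth 0 l j <= nth 0 l i.
Proof.
case/andP=> l_sorted _ le_ij.
have [lt_j|le_j] := ltnP j (size l); last by rewrite nth_default.
have lt_i : i < size l by lia.
have := @sorted_leq_nth _ geq (fun _ _ _ h1 h2 => leq_trans h2 h1) leqnn 0 l l_sorted i j.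
by rewrite !inE; apply.
Qed.

Section SkewShape.
Variables lam mu : seq nat.
Local Notation cell := (cell lam mu).

Lemma cell_inj (c d : cell) : row c = row d -> col c = col d -> c = d.
Proof.
case: c d => [[r j] ?] [[r' j'] ?]; rewrite /row /col /= => eq_r eq_j.
by apply/val_inj; congr pair; apply/val_inj.
Qed.

Lemma cell_bounds (c : cell) : nth 0 mu (row c) <= col c < nth 0 lam (row c).
Proof. by case: c => -[r j] /=. Qed.

Hypothesis lam_part : is_partition lam.

Lemma cell_at (r j : nat) : nth 0 mu r <= j -> j < nth 0 lam r ->
  {c : cell | row c = r /\ col c = j}.
Proof.
move=> mu_j j_lam.
have lt_r : r < size lam.
  by case: (ltnP r (size lam)) => // ?; rewrite nth_default in j_lam.
have lt_j : j < nth 0 lam 0 by have := partition_nth_le lam_part (leq0n r); lia.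
have in_c : in_skew lam mu (Ordinal lt_r, Ordinal lt_j) by rewrite /in_skew /= mu_j j_lam.
by exists (exist (in_skew lam mu) _ in_c).
Qed.

Lemma corner_ur (x y : cell) : row x <= row y -> col x <= col y ->
  {z : cell | row z = row x /\ col z = col y}.
Proof.
move=> le_r le_c; apply: cell_at.
  by have := cell_bounds x; lia.
by have := cell_bounds y; have := partition_nth_le lam_part le_r; lia.
Qed.

Hypothesis mu_part : is_partition mu.

Lemma corner_ll (x y : cell) : row x <= row y -> col x <= col y ->
  {z : cell | row z = row y /\ col z = col x}.
Proof.
move=> le_r le_c; apply: cell_at.
  by have := cell_bounds x; have := partition_nth_le mu_part le_r; lia.
by have := cell_bounds y; lia.
Qed.

End SkewShape.

Section Tableau.
Variables (lam mu : seq nat) (k : nat).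
Local Notation cell := (cell lam mu).
Local Notation filling := (filling lam mu k).

Definition tab_pair (key : letter k -> nat) (t : filling) (c d : cell) : bool :=
  [&& ((row c == row d) && (col c <= col d)) ==> (key (t c) <= key (t d)),
      ((col c == col d) && (row c <= row d)) ==> (key (t c) <= key (t d)),
      [&& c != d, row c == row d & t c == t d] ==> (t c).2
    & [&& c != d, col c == col d & t c == t d] ==> ~~ (t c).2].

Lemma is_tableauE key t : is_tableau key t = [forall c, forall d, tab_pair key t c d].
Proof. by []. Qed.

Variables (key : letter k -> nat) (t : filling).
Hypothesis t_tab : is_tableau key t.

Lemma tab_pairP c d : tab_pair key t c d.
Proof. by move: t_tab; rewrite is_tableauE => /forallP/(_ c)/forallP. Qed.

Lemma tab_row_le c d : row c = row d -> col c <= col d -> key (t c) <= key (t d).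
Proof.
case/and4P: (tab_pairP c d) => + _ _ _ /eqP eq_r le_c => /implyP; apply.
by rewrite eq_r le_c.
Qed.

Lemma tab_col_le c d : col c = col d -> row c <= row d -> key (t c) <= key (t d).
Proof.
case/and4P: (tab_pairP c d) => _ + _ _ /eqP eq_c le_r => /implyP; apply.
by rewrite eq_c le_r.
Qed.

Lemma tab_row_repeat c d : c != d -> row c = row d -> t c = t d -> (t c).2.
Proof.
case/and4P: (tab_pairP c d) => _ _ + _ ne /eqP eq_r /eqP eq_t => /implyP; apply.
by rewrite ne eq_r eq_t.
Qed.

Lemma tab_col_repeat c d : c != d -> col c = col d -> t c = t d -> ~~ (t c).2.
Proof.
case/and4P: (tab_pairP c d) => _ _ _ + ne /eqP eq_c /eqP eq_t => /implyP; apply.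
by rewrite ne eq_c eq_t.
Qed.

Lemma tab_le (lam_part : is_partition lam) c d :
  row c <= row d -> col c <= col d -> key (t c) <= key (t d).
Proof.
move=> le_r le_c; have [z [r_z c_z]] := corner_ur lam_part le_r le_c.
apply: (@leq_trans (key (t z))); first by apply: tab_row_le; rewrite ?r_z ?c_z.
by apply: tab_col_le; rewrite ?r_z ?c_z.
Qed.

End Tableau.

Section PairConditions.
Variables (lam mu : seq nat) (k : nat) (key : letter k -> nat).
Variables (s : filling lam mu k) (A : {set cell lam mu}).
Hypothesis row_ok : forall c d, c \in A -> d \in A -> row c = row d -> col c < col d ->
  key (s c) <= key (s d) /\ (s c = s d -> (s c).2).
Hypothesis col_ok : forall c d, c \in A -> d \in A -> col c = col d -> row c < row d ->
  key (s c) <= key (s d) /\ (s c = s d -> ~~ (s c).2).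

Lemma tab_pair_in c d : c \in A -> d \in A -> tab_pair key s c d.
Proof.
move=> Ac Ad; case: (eqVneq c d) => [<-|ne]; first by rewrite /tab_pair !leqnn !implybT eqxx.
rewrite /tab_pair ne /=; apply/and4P; split; apply/implyP.
- case/andP=> /eqP eq_r; rewrite leq_eqVlt => /predU1P[eq_c|lt_c].
    by case/eqP: ne; apply: cell_inj.
  by case: (row_ok Ac Ad eq_r lt_c).
- case/andP=> /eqP eq_c; rewrite leq_eqVlt => /predU1P[eq_r|lt_r].
    by case/eqP: ne; apply: cell_inj.
  by case: (col_ok Ac Ad eq_c lt_r).
- case/andP=> /eqP eq_r /eqP eq_t.
  case: (ltngtP (col c) (col d)) => [lt_c|lt_c|eq_c]; last by case/eqP: ne; apply: cell_inj.
    by case: (row_ok Ac Ad eq_r lt_c) => _; apply.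
  by case: (row_ok Ad Ac (esym eq_r) lt_c) => _ unm; rewrite eq_t unm.
- case/andP=> /eqP eq_c /eqP eq_t.
  case: (ltngtP (row c) (row d)) => [lt_r|lt_r|eq_r]; last by case/eqP: ne; apply: cell_inj.
    by case: (col_ok Ac Ad eq_c lt_r) => _; apply.
  by case: (col_ok Ad Ac (esym eq_c) lt_r) => _ mk; rewrite eq_t mk.
Qed.

End PairConditions.

(** * Matching cells of a finite set *)

Section FibreExtremes.
Variables (T I : finType) (pi : T -> I) (S : {set T}).

Definition nonmax (h : T -> nat) :=
  [set c in S | [exists c', [&& c' \in S, pi c' == pi c & h c < h c']]].
Definition nonmin (h : T -> nat) :=
  [set c in S | [exists c', [&& c' \in S, pi c' == pi c & h c' < h c]]].

Lemma card_maxima h : {in S &, forall x y, pi x = pi y -> h x = h y -> x = y} ->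
  #|S :\: nonmax h| = #|pi @: S|.
Proof.
move=> pi_h_inj; rewrite -(@card_in_imset _ _ pi); last first.
  move=> x y; rewrite !inE => /andP[x_max Sx] /andP[y_max Sy] pi_xy.
  apply: pi_h_inj => //; case: (ltngtP (h x) (h y)) => // lt_h.
    by case/negP: x_max; rewrite Sx; apply/existsP; exists y; rewrite Sy pi_xy eqxx.
  by case/negP: y_max; rewrite Sy; apply/existsP; exists x; rewrite Sx pi_xy eqxx.
congr #|pred_of_set _|; apply/setP => i; apply/imsetP/imsetP => -[x Sx ->].
  by exists x => //; move: Sx; rewrite !inE => /andP[].
have Px : (x \in S) && (pi x == pi x) by rewrite Sx eqxx.
have [y /andP[Sy /eqP pi_y] y_max] := @arg_maxnP _ x [pred y | (y \in S) && (pi y == pi x)] h Px.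
exists y; last by rewrite pi_y.
rewrite !inE Sy andbT; apply/existsP => -[z /and3P[Sz /eqP pi_z lt_h]].
by have := y_max z; rewrite inE Sz pi_z pi_y eqxx => /(_ isT); lia.
Qed.

Lemma nonmin_rev h (M := \max_(c in S) h c) : nonmin h = nonmax (fun c => M - h c).
Proof.
have le_M c : c \in S -> h c <= M by apply: leq_bigmax_cond.
apply/setP => c; rewrite !inE; case Sc: (c \in S) => //=.
apply: eq_existsb => c'; case Sc': (c' \in S) => //=; congr andb.
by have := le_M _ Sc; have := le_M _ Sc'; clearbody M; lia.
Qed.

Lemma card_nonmax_nonmin h : {in S &, forall x y, pi x = pi y -> h x = h y -> x = y} ->
  #|nonmax h| = #|nonmin h|.
Proof.
move=> pi_h_inj; set M := \max_(c in S) h c.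
have le_M c : c \in S -> h c <= M by apply: leq_bigmax_cond.
have rev_inj : {in S &, forall x y, pi x = pi y -> M - h x = M - h y -> x = y}.
  move=> x y Sx Sy pi_xy eq_h; apply: pi_h_inj => //.
  by have := le_M _ Sx; have := le_M _ Sy; lia.
have sub_max (h' : T -> nat) : nonmax h' \subset S.
  by apply/subsetP => c; rewrite inE => /andP[].
have := subset_leq_card (sub_max h); have := subset_leq_card (sub_max (fun c => M - h c)).
have := cardsD S (nonmax h); have := cardsD S (nonmax (fun c => M - h c)).
rewrite !(setIidPr (sub_max _)) (card_maxima rev_inj) (card_maxima pi_h_inj) -nonmin_rev.
lia.
Qed.

End FibreExtremes.

Section Relabelling.
Variables (T : finType) (U : eqType).

Definition transfer (X Y : {set T}) (c : T) : T := nth c (enum Y) (index c (enum X)).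

Lemma transfer_in (X Y : {set T}) c : #|X| = #|Y| -> c \in X -> transfer X Y c \in Y.
Proof.
move=> eq_XY Xc; rewrite /transfer -mem_enum; apply: mem_nth.
by rewrite -cardE -eq_XY cardE index_mem mem_enum.
Qed.

Lemma transferK (X Y : {set T}) c : #|X| = #|Y| -> c \in X -> transfer Y X (transfer X Y c) = c.
Proof.
move=> eq_XY Xc; rewrite /transfer index_uniq ?enum_uniq ?nth_index ?mem_enum //.
by rewrite -cardE -eq_XY cardE index_mem mem_enum.
Qed.

Definition relabel (A : {set T}) (psi : T -> T) (t : {ffun T -> U}) : {ffun T -> U} :=
  [ffun c => if c \in A then t (psi c) else t c].

Lemma relabel_in (A : {set T}) psi (t : {ffun T -> U}) c : c \in A -> relabel A psi t c = t (psi c).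
Proof. by rewrite ffunE => ->. Qed.

Lemma relabel_out (A : {set T}) psi (t : {ffun T -> U}) c : c \notin A -> relabel A psi t c = t c.
Proof. by rewrite ffunE => /negPf ->. Qed.

Variables (A : {set T}) (psi psi' : T -> T).
Hypotheses (psi_in : {in A, forall c, psi c \in A}) (psi'_in : {in A, forall c, psi' c \in A}).
Hypotheses (psiK : {in A, cancel psi psi'}) (psi'K : {in A, cancel psi' psi}).

Lemma relabelK t : relabel A psi' (relabel A psi t) = t.
Proof.
apply/ffunP => c; case: (boolP (c \in A)) => Ac; last by rewrite !relabel_out.
by rewrite !relabel_in ?psi'_in ?psi'K.
Qed.

Lemma card_relabel t x : #|[set c | relabel A psi t c == x]| = #|[set c | t c == x]|.
Proof.
rewrite -(cardsID A [set c | relabel A psi t c == x]) -(cardsID A [set c | t c == x]).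
congr addn; last first.
  by apply: eq_card => c; rewrite !inE; case: (boolP (c \in A)) => //= Ac; rewrite relabel_out.
rewrite -(@card_in_imset _ _ psi); last first.
  by move=> c d; rewrite !inE => /andP[_ Ac] /andP[_ Ad] eq_psi; rewrite -(psiK Ac) eq_psi psiK.
apply: eq_card => d; rewrite !inE; apply/imsetP/andP => [[c]|[td Ad]].
  by rewrite !inE => /andP[/eqP <- Ac] ->; rewrite relabel_in ?psi_in.
by exists (psi' d); rewrite ?psi'K // !inE relabel_in ?psi'_in ?psi'K ?td.
Qed.

End Relabelling.

Section BlockTransfer.
Variable T : finType.

Definition block_transfer (A X1 Y1 X2 Y2 : {set T}) (c : T) : T :=
  if c \in X2 then transfer X2 X1 c
  else if c \in Y2 then transfer Y2 Y1 c
  else transfer (A :\: (X2 :|: Y2)) (A :\: (X1 :|: Y1)) c.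

Variables (A X1 Y1 X2 Y2 : {set T}).
Hypotheses (X1A : X1 \subset A) (Y1A : Y1 \subset A) (X2A : X2 \subset A) (Y2A : Y2 \subset A).
Hypotheses (XY1 : [disjoint X1 & Y1]) (XY2 : [disjoint X2 & Y2]).
Hypotheses (eq_X : #|X1| = #|X2|) (eq_Y : #|Y1| = #|Y2|).

Lemma card_block_rest : #|A :\: (X1 :|: Y1)| = #|A :\: (X2 :|: Y2)|.
Proof.
rewrite !cardsD !(setIidPr _) ?subUset ?X1A ?Y1A ?X2A ?Y2A //.
by rewrite !cardsU (disjoint_setI0 XY1) (disjoint_setI0 XY2) eq_X eq_Y.
Qed.

Lemma block_transfer_X c : c \in X2 -> block_transfer A X1 Y1 X2 Y2 c \in X1.
Proof. by move=> X2c; rewrite /block_transfer X2c transfer_in. Qed.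

Lemma block_transfer_Y c : c \in Y2 -> block_transfer A X1 Y1 X2 Y2 c \in Y1.
Proof.
by move=> Y2c; rewrite /block_transfer (disjointFl XY2 Y2c) Y2c transfer_in.
Qed.

Lemma block_transfer_in c : c \in A -> block_transfer A X1 Y1 X2 Y2 c \in A.
Proof.
move=> Ac; rewrite /block_transfer; case: ifP => [X2c|nX2c]; first exact/(subsetP X1A)/transfer_in.
case: ifP => [Y2c|nY2c]; first exact/(subsetP Y1A)/transfer_in.
have : c \in A :\: (X2 :|: Y2) by rewrite !inE nX2c nY2c.
by move/(transfer_in (esym card_block_rest)); rewrite inE => /andP[].
Qed.

Lemma block_transferK :
  {in A, cancel (block_transfer A X1 Y1 X2 Y2) (block_transfer A X2 Y2 X1 Y1)}.
Proof.
move=> c Ac; rewrite {2}/block_transfer; case: ifP => [X2c|nX2c].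
  by rewrite /block_transfer transfer_in // (transferK (esym eq_X) X2c).
case: ifP => [Y2c|nY2c].
  have Y1c := transfer_in (esym eq_Y) Y2c.
  by rewrite /block_transfer (disjointFl XY1 Y1c) Y1c (transferK (esym eq_Y) Y2c).
have Rc : c \in A :\: (X2 :|: Y2) by rewrite !inE nX2c nY2c.
have := transfer_in (esym card_block_rest) Rc; rewrite !inE negb_or => /andP[/andP[nX1 nY1] _].
by rewrite /block_transfer (negPf nX1) (negPf nY1) (transferK (esym card_block_rest) Rc).
Qed.

End BlockTransfer.

Section Neighbours.
Variables lam mu : seq nat.
Local Notation cell := (cell lam mu).

Definition row_ord (c : cell) : 'I_(size lam) := (val c).1.
Definition col_ord (c : cell) : 'I_(nth 0 lam 0) := (val c).2.

Definition has_right (A : {set cell}) := nonmax row_ord A (@col lam mu).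
Definition has_left (A : {set cell}) := nonmin row_ord A (@col lam mu).
Definition has_below (A : {set cell}) := nonmax col_ord A (@row lam mu).
Definition has_above (A : {set cell}) := nonmin col_ord A (@row lam mu).

Lemma card_has_right_left A : #|has_right A| = #|has_left A|.
Proof. by apply: card_nonmax_nonmin => c d _ _ /(congr1 val) eq_r; apply: cell_inj. Qed.

Lemma card_has_below_above A : #|has_below A| = #|has_above A|.
Proof. by apply: card_nonmax_nonmin => c d _ _ /(congr1 val) eq_c eq_r; apply: cell_inj. Qed.

Variables (A : {set cell}) (c c' : cell).

Lemma has_rightE : c \in has_right A -> exists d, [/\ d \in A, row d = row c & col c < col d].
Proof. by rewrite inE => /andP[_ /existsP[d /and3P[Ad /eqP/(congr1 val) ? ?]]]; exists d. Qed.
Lemma has_leftE : c \in has_left A -> exists d, [/\ d \in A, row d = row c & col d < col c].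
Proof. by rewrite inE => /andP[_ /existsP[d /and3P[Ad /eqP/(congr1 val) ? ?]]]; exists d. Qed.
Lemma has_belowE : c \in has_below A -> exists d, [/\ d \in A, col d = col c & row c < row d].
Proof. by rewrite inE => /andP[_ /existsP[d /and3P[Ad /eqP/(congr1 val) ? ?]]]; exists d. Qed.
Lemma has_aboveE : c \in has_above A -> exists d, [/\ d \in A, col d = col c & row d < row c].
Proof. by rewrite inE => /andP[_ /existsP[d /and3P[Ad /eqP/(congr1 val) ? ?]]]; exists d. Qed.

Lemma has_right_sub : {subset has_right A <= A}. Proof. by move=> d; rewrite inE => /andP[]. Qed.
Lemma has_left_sub : {subset has_left A <= A}. Proof. by move=> d; rewrite inE => /andP[]. Qed.
Lemma has_below_sub : {subset has_below A <= A}. Proof. by move=> d; rewrite inE => /andP[]. Qed.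
Lemma has_above_sub : {subset has_above A <= A}. Proof. by move=> d; rewrite inE => /andP[]. Qed.

Hypotheses (Ac : c \in A) (Ac' : c' \in A).

Lemma has_rightI : row c' = row c -> col c < col c' -> c \in has_right A.
Proof.
move=> eq_r lt_c; rewrite inE Ac; apply/existsP; exists c'.
by rewrite Ac' lt_c andbT; apply/eqP/val_inj.
Qed.
Lemma has_leftI : row c' = row c -> col c' < col c -> c \in has_left A.
Proof.
move=> eq_r lt_c; rewrite inE Ac; apply/existsP; exists c'.
by rewrite Ac' lt_c andbT; apply/eqP/val_inj.
Qed.
Lemma has_belowI : col c' = col c -> row c < row c' -> c \in has_below A.
Proof.
move=> eq_c lt_r; rewrite inE Ac; apply/existsP; exists c'.
by rewrite Ac' lt_r andbT; apply/eqP/val_inj.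
Qed.
Lemma has_aboveI : col c' = col c -> row c' < row c -> c \in has_above A.
Proof.
move=> eq_c lt_r; rewrite inE Ac; apply/existsP; exists c'.
by rewrite Ac' lt_r andbT; apply/eqP/val_inj.
Qed.

End Neighbours.

(** * Exchanging two adjacent letters *)

Section ForcedLetters.
Variables (lam mu : seq nat) (k : nat) (key : letter k -> nat).
Variables (x y : letter k) (s : filling lam mu k) (A : {set cell lam mu}).
Hypotheses (s_tab : is_tableau key s) (lt_xy : key x < key y).
Hypothesis A_xy : forall c, c \in A -> (s c == x) || (s c == y).

Lemma forced_has_right c : ~~ y.2 -> c \in has_right A -> s c = x.
Proof.
move=> y_marked Rc; have [c' [Ac' eq_r lt_c]] := has_rightE Rc.
have le_key := tab_row_le s_tab (esym eq_r) (ltnW lt_c).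
case/orP: (A_xy (has_right_sub Rc)) => /eqP sc //.
case/orP: (A_xy Ac') => /eqP sc'; first by move: le_key; rewrite sc sc'; lia.
have ne : c != c' by apply: contraTneq lt_c => ->; rewrite ltnn.
by move: y_marked; rewrite -sc (tab_row_repeat s_tab ne (esym eq_r)) // sc sc'.
Qed.

Lemma forced_has_left c : ~~ x.2 -> c \in has_left A -> s c = y.
Proof.
move=> x_marked Lc; have [c' [Ac' eq_r lt_c]] := has_leftE Lc.
have le_key := tab_row_le s_tab eq_r (ltnW lt_c).
case/orP: (A_xy (has_left_sub Lc)) => /eqP sc //.
case/orP: (A_xy Ac') => /eqP sc'; last by move: le_key; rewrite sc sc'; lia.
have ne : c' != c by apply: contraTneq lt_c => ->; rewrite ltnn.
by move: x_marked; rewrite -sc' (tab_row_repeat s_tab ne eq_r) // sc sc'.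
Qed.

Lemma forced_has_above c : x.2 -> c \in has_above A -> s c = y.
Proof.
move=> x_unmarked Uc; have [c' [Ac' eq_c lt_r]] := has_aboveE Uc.
have le_key := tab_col_le s_tab eq_c (ltnW lt_r).
case/orP: (A_xy (has_above_sub Uc)) => /eqP sc //.
case/orP: (A_xy Ac') => /eqP sc'; last by move: le_key; rewrite sc sc'; lia.
have ne : c' != c by apply: contraTneq lt_r => ->; rewrite ltnn.
by move: x_unmarked; rewrite -sc' (negPf (tab_col_repeat s_tab ne eq_c _)) // sc sc'.
Qed.

Lemma forced_has_below c : y.2 -> c \in has_below A -> s c = x.
Proof.
move=> y_unmarked Dc; have [c' [Ac' eq_c lt_r]] := has_belowE Dc.
have le_key := tab_col_le s_tab (esym eq_c) (ltnW lt_r).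
case/orP: (A_xy (has_below_sub Dc)) => /eqP sc //.
case/orP: (A_xy Ac') => /eqP sc'; first by move: le_key; rewrite sc sc'; lia.
have ne : c != c' by apply: contraTneq lt_r => ->; rewrite ltnn.
by move: y_unmarked; rewrite -sc (negPf (tab_col_repeat s_tab ne (esym eq_c) _)) // sc sc'.
Qed.

End ForcedLetters.

Section AdjacentSwap.
Variables (lam mu : seq nat) (k : nat).
Local Notation cell := (cell lam mu).
Local Notation filling := (filling lam mu k).

Definition adj_swap (key1 key2 : letter k -> nat) (a b : letter k) : Prop :=
  [/\ key1 b = (key1 a).+1,
      forall z, z != a -> z != b -> (key1 z < key1 a) || (key1 b < key1 z),
      key2 a = key1 b, key2 b = key1 a
    & forall z, z != a -> z != b -> key2 z = key1 z].

Lemma adj_swap_sym key1 key2 a b : adj_swap key1 key2 a b -> adj_swap key2 key1 b a.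
Proof.
case=> key1_b key1_out key2_a key2_b key2_out; split=> [|z zb za|||z zb za].
- by rewrite key2_a key2_b.
- by rewrite key2_out // key2_a key2_b key1_out.
- by rewrite key2_a.
- by rewrite key2_b.
- by rewrite key2_out.
Qed.

Definition region (a b : letter k) (t : filling) : {set cell} :=
  [set c | (t c == a) || (t c == b)].

Lemma regionE a b (t : filling) c : (c \in region a b t) = (t c == a) || (t c == b).
Proof. by rewrite inE. Qed.

Lemma region_sym a b (t : filling) : region b a t = region a b t.
Proof. by apply/setP => c; rewrite !regionE orbC. Qed.

Lemma region_relabel a b (t : filling) psi : {in region a b t, forall c, psi c \in region a b t} ->
  region a b (relabel (region a b t) psi t) = region a b t.
Proof.
move=> psi_in; apply/setP => c; case: (boolP (c \in region a b t)) => Rc.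
  by rewrite regionE relabel_in // -regionE psi_in.
by rewrite regionE relabel_out // -regionE (negPf Rc).
Qed.

Variables (key1 key2 : letter k -> nat) (a b : letter k).
Hypothesis swap : adj_swap key1 key2 a b.

Lemma key_region (t : filling) c : c \in region a b t -> key1 a <= key1 (t c) <= key1 b.
Proof. by case: swap => key1_b _ _ _ _; rewrite regionE => /orP[] /eqP ->; lia. Qed.

Lemma region_between (t : filling) c : key1 a <= key1 (t c) <= key1 b -> c \in region a b t.
Proof.
case: swap => key1_b key1_out _ _ _ bounds; rewrite regionE.
by apply/negPn/negP; rewrite negb_or => /andP[/key1_out/[apply]]; lia.
Qed.

Lemma region_convex (lam_part : is_partition lam) (t : filling) c d z : is_tableau key1 t ->
  c \in region a b t -> d \in region a b t -> row c <= row z <= row d -> col c <= col z <= col d ->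
  z \in region a b t.
Proof.
move=> t_tab Rc Rd /andP[le_cz le_zd] /andP[le_cz' le_zd']; apply: region_between.
have /andP[le_a _] := key_region Rc; have /andP[_ le_b] := key_region Rd.
rewrite (leq_trans le_a (tab_le t_tab lam_part le_cz le_cz')).
exact: leq_trans (tab_le t_tab lam_part le_zd le_zd') le_b.
Qed.

Lemma region_corner_ur (lam_part : is_partition lam) (t : filling) c d : is_tableau key1 t ->
  c \in region a b t -> d \in region a b t -> row c <= row d -> col c <= col d ->
  {z : cell | [/\ z \in region a b t, row z = row c & col z = col d]}.
Proof.
move=> t_tab Rc Rd le_r le_c; have [z [rz cz]] := corner_ur lam_part le_r le_c.
exists z; split=> //.
by apply: (region_convex lam_part t_tab Rc Rd); rewrite ?rz ?cz ?leqnn ?le_r ?le_c.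
Qed.

Lemma region_corner_ll (lam_part : is_partition lam) (mu_part : is_partition mu) (t : filling) c d :
  is_tableau key1 t -> c \in region a b t -> d \in region a b t ->
  row c <= row d -> col c <= col d ->
  {z : cell | [/\ z \in region a b t, row z = row d & col z = col c]}.
Proof.
move=> t_tab Rc Rd le_r le_c; have [z [rz cz]] := corner_ll lam_part mu_part le_r le_c.
exists z; split=> //.
by apply: (region_convex lam_part t_tab Rc Rd); rewrite ?rz ?cz ?leqnn ?le_r ?le_c.
Qed.

Lemma swap_out_le z w w' : ~~ ((z == a) || (z == b)) -> (w == a) || (w == b) ->
  (w' == a) || (w' == b) -> key1 z <= key1 w -> key2 z <= key2 w'.
Proof.
case: swap => key1_b key1_out key2_a key2_b key2_out.
rewrite negb_or => /andP[za zb] /orP[] /eqP -> /orP[] /eqP ->;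
by rewrite ?key2_a ?key2_b key2_out //; have := key1_out z za zb; lia.
Qed.

Lemma swap_out_ge z w w' : ~~ ((z == a) || (z == b)) -> (w == a) || (w == b) ->
  (w' == a) || (w' == b) -> key1 w <= key1 z -> key2 w' <= key2 z.
Proof.
case: swap => key1_b key1_out key2_a key2_b key2_out.
rewrite negb_or => /andP[za zb] /orP[] /eqP -> /orP[] /eqP ->;
by rewrite ?key2_a ?key2_b key2_out //; have := key1_out z za zb; lia.
Qed.

Lemma swap_tab (t s : filling) : is_tableau key1 t ->
  {in [predC region a b t], forall c, s c = t c} ->
  {in region a b t, forall c, (s c == a) || (s c == b)} ->
  (forall c d, c \in region a b t -> d \in region a b t -> row c = row d -> col c < col d ->
    key2 (s c) <= key2 (s d) /\ (s c = s d -> (s c).2)) ->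
  (forall c d, c \in region a b t -> d \in region a b t -> col c = col d -> row c < row d ->
    key2 (s c) <= key2 (s d) /\ (s c = s d -> ~~ (s c).2)) ->
  is_tableau key2 s.
Proof.
move=> t_tab s_out s_in row_ok col_ok.
have t_le c d : (row c == row d) && (col c <= col d) || (col c == col d) && (row c <= row d) ->
    key1 (t c) <= key1 (t d).
  case/orP=> /andP[/eqP eq_rc le_rc].
    exact: (tab_row_le t_tab eq_rc le_rc).
  exact: (tab_col_le t_tab eq_rc le_rc).
have mixed c d : s c != s d -> (key1 (t c) <= key1 (t d) -> key2 (s c) <= key2 (s d)) ->
    tab_pair key2 s c d.
  move=> ne mono; rewrite /tab_pair (negPf ne) !andbF /= andbT.
  by apply/andP; split; apply/implyP => cond; apply/mono/t_le; rewrite cond ?orbT.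
rewrite is_tableauE; apply/forallP => c; apply/forallP => d.
case: (boolP (c \in region a b t)) => [Rc|nRc]; case: (boolP (d \in region a b t)) => [Rd|nRd].
- exact: (tab_pair_in row_ok col_ok).
- have [sc sd] := (s_in c Rc, s_out d nRd); move: Rc nRd; rewrite !regionE => Rc nRd.
  apply: mixed; last by rewrite sd; exact: (swap_out_ge nRd Rc sc).
  by apply: contraNneq nRd => eq_s; rewrite -sd -eq_s.
- have [sc sd] := (s_out c nRc, s_in d Rd); move: nRc Rd; rewrite !regionE => nRc Rd.
  apply: mixed; last by rewrite sc; exact: (swap_out_le nRc Rd sd).
  by apply: contraNneq nRc => eq_s; rewrite -sc eq_s.
- have := tab_pairP t_tab c d; rewrite /tab_pair (s_out c nRc) (s_out d nRd).
  move: nRc nRd; rewrite !regionE !negb_or => /andP[ca cb] /andP[da db].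
  by case: swap => _ _ _ _ key2_out; rewrite !key2_out.
Qed.

End AdjacentSwap.

Section WeightBijections.
Variables (lam mu : seq nat) (k : nat).
Local Notation filling := (filling lam mu k).

Definition tab_of (key : letter k -> nat) := {t : filling | is_tableau key t}.

Definition weight_bij (key1 key2 : letter k -> nat) :=
  exists f : tab_of key1 -> tab_of key2,
    bijective f /\ forall t, dweight (val (f t)) = dweight (val t).

Lemma weight_bij_trans key1 key2 key3 :
  weight_bij key1 key2 -> weight_bij key2 key3 -> weight_bij key1 key3.
Proof.
move=> [f [f_bij f_w]] [g [g_bij g_w]]; exists (g \o f).
by split=> [|t /=]; [exact: bij_comp | rewrite g_w f_w].
Qed.

Lemma weight_bij_eq key1 key2 : key1 =1 key2 -> weight_bij key1 key2.
Proof.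
move=> eq_key; have same (t : filling) : is_tableau key1 t = is_tableau key2 t.
  by apply: eq_forallb => c; apply: eq_forallb => d; rewrite !eq_key.
exists (fun t => exist _ (val t) (etrans (esym (same _)) (valP t))); split=> //.
by exists (fun t => exist _ (val t) (etrans (same _) (valP t))) => t; apply: val_inj.
Qed.

Lemma weight_bij_of_maps key1 key2 (F G : filling -> filling) :
  (forall t, is_tableau key1 t -> is_tableau key2 (F t)) ->
  (forall t, is_tableau key2 t -> is_tableau key1 (G t)) ->
  (forall t, is_tableau key1 t -> G (F t) = t) ->
  (forall t, is_tableau key2 t -> F (G t) = t) ->
  (forall t x, is_tableau key1 t -> #|[set c | F t c == x]| = #|[set c | t c == x]|) ->
  weight_bij key1 key2.
Proof.
move=> F_tab G_tab FK GK F_count.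
exists (fun t => exist _ (F (val t)) (F_tab _ (valP t))); split.
  exists (fun t => exist _ (G (val t)) (G_tab _ (valP t))) => t; apply: val_inj => /=.
    exact: FK (valP t).
  exact: GK (valP t).
move=> t; apply/ffunP => i; rewrite !ffunE.
have card_set (u : filling) y : #|[pred c | u c == y]| = #|[set c | u c == y]|.
  by apply: eq_card => c; rewrite inE.
by rewrite !card_set !F_count ?(valP t).
Qed.

End WeightBijections.

Section UnmarkedMarkedSwap.
Variables (lam mu : seq nat) (k : nat).
Hypotheses (lam_part : is_partition lam) (mu_part : is_partition mu).
Local Notation cell := (cell lam mu).
Local Notation filling := (filling lam mu k).

(* Cells with a region neighbour on the left are fed from cells with one on the right and
   cells with one below from cells with one above; every other cell of the region is
   unconstrained in both orders, so any matching of those works. *)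
Definition um_perm (R : {set cell}) :=
  block_transfer R (has_right R) (has_above R) (has_left R) (has_below R).
Definition um_perm_inv (R : {set cell}) :=
  block_transfer R (has_left R) (has_below R) (has_right R) (has_above R).

Lemma um_perm_spec (R : {set cell}) :
  [disjoint has_right R & has_above R] -> [disjoint has_left R & has_below R] ->
  [/\ {in R, forall c, um_perm R c \in R}, {in R, forall c, um_perm_inv R c \in R},
      {in R, cancel (um_perm R) (um_perm_inv R)} & {in R, cancel (um_perm_inv R) (um_perm R)}].
Proof.
move=> RU LD.
have sR : has_right R \subset R by apply/subsetP => c /has_right_sub.
have sL : has_left R \subset R by apply/subsetP => c /has_left_sub.
have sD : has_below R \subset R by apply/subsetP => c /has_below_sub.
have sU : has_above R \subset R by apply/subsetP => c /has_above_sub.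
have eRL := card_has_right_left R; have eDU := card_has_below_above R.
split=> c Rc; by [apply: block_transfer_in | apply: block_transferK].
Qed.

Variables (key1 key2 : letter k -> nat) (a b : letter k).
Hypotheses (swap : adj_swap key1 key2 a b) (a_unmarked : a.2) (b_marked : ~~ b.2).

Let lt_ab : key1 a < key1 b. Proof. by case: swap => ->. Qed.
Let lt_ba : key2 b < key2 a. Proof. by case: swap => -> _ -> ->. Qed.
Let a_ne_b : a != b. Proof. by apply: contraTneq lt_ab => ->; rewrite ltnn. Qed.
Let key1_ab w : (w == a) || (w == b) -> key1 a <= key1 w <= key1 b.
Proof. by case/orP=> /eqP ->; rewrite leqnn ltnW. Qed.
Let key2_ab w : (w == a) || (w == b) -> key2 b <= key2 w <= key2 a.
Proof. by case/orP=> /eqP ->; rewrite leqnn ltnW. Qed.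

Section Source.
Variable t : filling.
Hypothesis t_tab : is_tableau key1 t.
Local Notation R := (region a b t).

Let R_ab c : c \in R -> (t c == a) || (t c == b). Proof. by rewrite regionE. Qed.

Lemma um_src_right c : c \in has_right R -> t c = a.
Proof. exact: (forced_has_right t_tab lt_ab R_ab b_marked). Qed.

Lemma um_src_above c : c \in has_above R -> t c = b.
Proof. exact: (forced_has_above t_tab lt_ab R_ab a_unmarked). Qed.

Lemma um_src_right_above : [disjoint has_right R & has_above R].
Proof.
rewrite disjoint_subset; apply/subsetP => c /um_src_right tc; rewrite inE.
by apply: contraNN a_ne_b => /um_src_above; rewrite tc => ->.
Qed.

Lemma um_src_left_below : [disjoint has_left R & has_below R].
Proof.
rewrite disjoint_subset; apply/subsetP => c Lc; rewrite inE; apply/negP => Dc.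
have [w [Rw eq_rw lt_cw]] := has_leftE Lc; have [d [Rd eq_cd lt_rd]] := has_belowE Dc.
have le_r : row w <= row d by rewrite eq_rw ltnW.
have le_c : col w <= col d by rewrite eq_cd ltnW.
have [z [Rz rz cz]] := region_corner_ll swap lam_part mu_part t_tab Rw Rd le_r le_c.
have zR : z \in has_right R by apply: (has_rightI Rz Rd (esym rz)); rewrite cz eq_cd.
have zU : z \in has_above R by apply: (has_aboveI Rz Rw (esym cz)); rewrite rz eq_rw.
by move: (um_src_right zR) (um_src_above zU) => -> /eqP; rewrite (negPf a_ne_b).
Qed.

End Source.

Section Target.
Variable s : filling.
Hypothesis s_tab : is_tableau key2 s.
Local Notation R := (region a b s).

Let R_ba c : c \in R -> (s c == b) || (s c == a). Proof. by rewrite regionE orbC. Qed.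

Lemma um_tgt_left c : c \in has_left R -> s c = a.
Proof. exact: (forced_has_left s_tab lt_ba R_ba b_marked). Qed.

Lemma um_tgt_below c : c \in has_below R -> s c = b.
Proof. exact: (forced_has_below s_tab lt_ba R_ba a_unmarked). Qed.

Lemma um_tgt_left_below : [disjoint has_left R & has_below R].
Proof.
rewrite disjoint_subset; apply/subsetP => c /um_tgt_left sc; rewrite inE.
by apply: contraNN a_ne_b => /um_tgt_below; rewrite sc => ->.
Qed.

Lemma um_tgt_right_above : [disjoint has_right R & has_above R].
Proof.
rewrite disjoint_subset; apply/subsetP => c Rc; rewrite inE; apply/negP => Uc.
have [w [Rw eq_rw lt_cw]] := has_rightE Rc; have [u [Ru eq_cu lt_ru]] := has_aboveE Uc.
rewrite -region_sym in Ru Rw.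
have le_r : row u <= row w by rewrite eq_rw ltnW.
have le_c : col u <= col w by rewrite eq_cu ltnW.
have [z [Rz rz cz]] := region_corner_ur (adj_swap_sym swap) lam_part s_tab Ru Rw le_r le_c.
rewrite region_sym in Ru Rw Rz.
have zL : z \in has_left R by apply: (has_leftI Rz Ru (esym rz)); rewrite cz eq_cu.
have zD : z \in has_below R by apply: (has_belowI Rz Rw (esym cz)); rewrite rz eq_rw.
by move: (um_tgt_left zL) (um_tgt_below zD) => -> /eqP; rewrite (negPf a_ne_b).
Qed.

End Target.

Definition um (t : filling) : filling := relabel (region a b t) (um_perm (region a b t)) t.
Definition um_inv (s : filling) : filling := relabel (region a b s) (um_perm_inv (region a b s)) s.

Lemma um_region t : is_tableau key1 t -> region a b (um t) = region a b t.
Proof.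
move=> t_tab; apply: region_relabel.
by case: (um_perm_spec (um_src_right_above t_tab) (um_src_left_below t_tab)).
Qed.

Lemma um_inv_region s : is_tableau key2 s -> region a b (um_inv s) = region a b s.
Proof.
move=> s_tab; apply: region_relabel.
by case: (um_perm_spec (um_tgt_right_above s_tab) (um_tgt_left_below s_tab)).
Qed.

Lemma umK t : is_tableau key1 t -> um_inv (um t) = t.
Proof.
move=> t_tab; rewrite /um_inv um_region //.
by case: (um_perm_spec (um_src_right_above t_tab) (um_src_left_below t_tab)) => *; apply: relabelK.
Qed.

Lemma um_invK s : is_tableau key2 s -> um (um_inv s) = s.
Proof.
move=> s_tab; rewrite /um um_inv_region //.
by case: (um_perm_spec (um_tgt_right_above s_tab) (um_tgt_left_below s_tab)) => *; apply: relabelK.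
Qed.

Lemma card_um t x : is_tableau key1 t -> #|[set c | um t c == x]| = #|[set c | t c == x]|.
Proof.
move=> t_tab.
have [in1 in2 K1 K2] := um_perm_spec (um_src_right_above t_tab) (um_src_left_below t_tab).
exact: (card_relabel in1 in2 K1 K2).
Qed.

Lemma um_tab t : is_tableau key1 t -> is_tableau key2 (um t).
Proof.
move=> t_tab; set R := region a b t.
have RU := um_src_right_above t_tab; have LD := um_src_left_below t_tab.
have [um_in _ _ _] := um_perm_spec RU LD.
have um_R c : c \in R -> um t c = t (um_perm R c) by exact: relabel_in.
have um_ab c : c \in R -> (um t c == a) || (um t c == b).
  by move=> Rc; rewrite um_R // -regionE um_in.
apply: (swap_tab swap t_tab) => [c|//|c d Rc Rd eq_r lt_c|c d Rc Rd eq_c lt_r].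
- by rewrite inE => nRc; rewrite relabel_out.
- have Ld : d \in has_left R by apply: (has_leftI Rd Rc).
  have -> : um t d = a.
    by rewrite um_R // um_src_right // block_transfer_X // card_has_right_left.
  by split=> [|->//]; have /andP[] := key2_ab (um_ab c Rc).
- have Dc : c \in has_below R by apply: (has_belowI Rc Rd).
  have -> : um t c = b.
    by rewrite um_R // um_src_above // block_transfer_Y // card_has_below_above.
  by split=> [|_//]; have /andP[] := key2_ab (um_ab d Rd).
Qed.

Lemma um_inv_tab s : is_tableau key2 s -> is_tableau key1 (um_inv s).
Proof.
move=> s_tab; set R := region a b s.
have RU := um_tgt_right_above s_tab; have LD := um_tgt_left_below s_tab.
have [_ inv_in _ _] := um_perm_spec RU LD.
have inv_R c : c \in R -> um_inv s c = s (um_perm_inv R c) by exact: relabel_in.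
have inv_ab c : c \in R -> (um_inv s c == a) || (um_inv s c == b).
  by move=> Rc; rewrite inv_R // -regionE inv_in.
apply: (swap_tab (adj_swap_sym swap) s_tab); rewrite region_sym.
- by move=> c; rewrite inE => nRc; rewrite relabel_out.
- by move=> c /inv_ab; rewrite orbC.
- move=> c d Rc Rd eq_r lt_c; have Rc' : c \in has_right R by apply: (has_rightI Rc Rd).
  have -> : um_inv s c = a.
    by rewrite inv_R // um_tgt_left // block_transfer_X // card_has_right_left.
  by split=> [|_//]; have /andP[] := key1_ab (inv_ab d Rd).
- move=> c d Rc Rd eq_c lt_r; have Ud : d \in has_above R by apply: (has_aboveI Rd Rc).
  have -> : um_inv s d = b.
    by rewrite inv_R // um_tgt_below // block_transfer_Y // card_has_below_above.
  by split=> [|->//]; have /andP[] := key1_ab (inv_ab c Rc).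
Qed.

Lemma weight_bij_um : weight_bij lam mu key1 key2.
Proof.
apply: (weight_bij_of_maps (F := um) (G := um_inv)).
- exact: um_tab.
- exact: um_inv_tab.
- exact: umK.
- exact: um_invK.
- by move=> t x; apply: card_um.
Qed.

End UnmarkedMarkedSwap.

Section ColumnReflection.
Variables (lam mu : seq nat) (F : {set cell lam mu}).
Local Notation cell := (cell lam mu).

Definition col_rank (c : cell) := #|[set d in F | (col d == col c) && (row d < row c)]|.
Definition col_count (c : cell) := #|[set d in F | col d == col c]|.
Definition col_reflect (c : cell) : cell :=
  odflt c [pick d in F | (col d == col c) && (col_rank d == (col_count c).-1 - col_rank c)].

Lemma col_count_eq c d : col c = col d -> col_count c = col_count d.
Proof. by move=> eq_c; apply: eq_card => x; rewrite !inE eq_c. Qed.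

Lemma col_rank_lt c : c \in F -> col_rank c < col_count c.
Proof.
move=> Fc; apply: proper_card; apply/properP; split.
  by apply/subsetP => d; rewrite !inE => /andP[-> /andP[-> _]].
by exists c; rewrite !inE ?Fc ?eqxx // ltnn andbF.
Qed.

Lemma col_rank_mono c d : c \in F -> d \in F -> col c = col d -> row c < row d ->
  col_rank c < col_rank d.
Proof.
move=> Fc Fd eq_c lt_r; apply: proper_card; apply/properP; split.
  apply/subsetP => x; rewrite !inE => /andP[-> /andP[/eqP -> lt_x]].
  by rewrite eq_c eqxx /=; lia.
by exists c; rewrite !inE ?Fc ?eq_c ?eqxx ?lt_r // ltnn andbF.
Qed.

Lemma col_rank_inj c d : c \in F -> d \in F -> col c = col d -> col_rank c = col_rank d -> c = d.
Proof.
move=> Fc Fd eq_c eq_rk; case: (ltngtP (row c) (row d)) => [lt_r|lt_r|eq_r].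
- by have := col_rank_mono Fc Fd eq_c lt_r; lia.
- by have := col_rank_mono Fd Fc (esym eq_c) lt_r; lia.
- exact: cell_inj.
Qed.

Lemma col_rank_onto c v : c \in F -> v < col_count c ->
  exists d, [/\ d \in F, col d = col c & col_rank d = v].
Proof.
move=> Fc lt_v; set C := [set d in F | col d == col c].
have rk_uniq : uniq (map col_rank (enum C)).
  rewrite map_inj_in_uniq ?enum_uniq // => x y; rewrite !mem_enum !inE.
  by move=> /andP[Fx /eqP cx] /andP[Fy /eqP cy]; apply: col_rank_inj; rewrite ?cx ?cy.
have rk_sub : {subset map col_rank (enum C) <= iota 0 (col_count c)}.
  move=> v' /mapP[x]; rewrite mem_enum inE => /andP[Fx /eqP cx] ->.
  by rewrite mem_iota /= (col_count_eq (esym cx)) col_rank_lt.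
have rk_size : size (iota 0 (col_count c)) <= size (map col_rank (enum C)).
  by rewrite size_iota size_map -cardE.
have [_ rk_eq] := uniq_min_size rk_uniq rk_sub rk_size.
have : v \in iota 0 (col_count c) by rewrite mem_iota.
by rewrite -rk_eq => /mapP[d]; rewrite mem_enum inE => /andP[Fd /eqP cd] ->; exists d.
Qed.

Lemma col_reflect_spec c : c \in F ->
  [/\ col_reflect c \in F, col (col_reflect c) = col c
    & col_rank (col_reflect c) = (col_count c).-1 - col_rank c].
Proof.
move=> Fc; rewrite /col_reflect; case: pickP => [d /and3P[Fd /eqP -> /eqP ->]|none] //=.
have lt_v : (col_count c).-1 - col_rank c < col_count c by have := col_rank_lt Fc; lia.
have [d [Fd cd rkd]] := col_rank_onto Fc lt_v.
by move: (none d); rewrite Fd cd rkd !eqxx.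
Qed.

Lemma col_reflect_in c : c \in F -> col_reflect c \in F.
Proof. by case/col_reflect_spec. Qed.

Lemma col_reflect_col c : c \in F -> col (col_reflect c) = col c.
Proof. by case/col_reflect_spec. Qed.

Lemma col_reflectK : {in F, involutive col_reflect}.
Proof.
move=> c Fc; have [Fc' cc' rkc'] := col_reflect_spec Fc.
have [Fc'' cc'' rkc''] := col_reflect_spec Fc'.
apply: col_rank_inj; rewrite ?cc'' //.
by rewrite rkc'' (col_count_eq cc') rkc'; have := col_rank_lt Fc; lia.
Qed.

Lemma col_reflect_rev c d : c \in F -> d \in F -> col c = col d -> row c < row d ->
  row (col_reflect d) < row (col_reflect c).
Proof.
move=> Fc Fd eq_c lt_r; have lt_rk := col_rank_mono Fc Fd eq_c lt_r.
have [Fc' cc' rkc'] := col_reflect_spec Fc; have [Fd' cd' rkd'] := col_reflect_spec Fd.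
have eq_cnt := col_count_eq eq_c; have := col_rank_lt Fc; have := col_rank_lt Fd.
have eq_c' : col (col_reflect c) = col (col_reflect d) by rewrite cc' cd'.
case: (ltngtP (row (col_reflect d)) (row (col_reflect c))) => [//|lt_r'|eq_r'].
  by have := col_rank_mono Fc' Fd' eq_c' lt_r'; rewrite rkc' rkd' eq_cnt; lia.
by move: rkc'; rewrite -(cell_inj eq_r' (esym eq_c')) rkd' eq_cnt; lia.
Qed.

End ColumnReflection.

Section MarkedMarkedSwap.
Variables (lam mu : seq nat) (k : nat).
Hypotheses (lam_part : is_partition lam) (mu_part : is_partition mu).
Local Notation cell := (cell lam mu).
Local Notation filling := (filling lam mu k).

Definition row_single (R : {set cell}) := R :\: (has_right R :|: has_left R).

Lemma in_row_single (R : {set cell}) c :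
  (c \in row_single R) = [&& c \notin has_right R, c \notin has_left R & c \in R].
Proof. by rewrite in_setD in_setU negb_or andbA. Qed.

(* Right and left cells of a row exchange their letters; a cell alone in its row is
   reflected within its column, which reverses the column word a..ab..b into b..ba..a. *)
Definition mm_perm (R : {set cell}) (c : cell) : cell :=
  if c \in has_right R then transfer (has_right R) (has_left R) c
  else if c \in has_left R then transfer (has_left R) (has_right R) c
  else col_reflect (row_single R) c.

Lemma mm_perm_spec (R : {set cell}) : [disjoint has_right R & has_left R] ->
  {in R, forall c, mm_perm R c \in R} /\ {in R, involutive (mm_perm R)}.
Proof.
move=> RL; have eRL := card_has_right_left R.
split=> c Rc.
  rewrite /mm_perm; case: ifP => [Rgt|/negbT nRgt]; first exact/has_left_sub/transfer_in.
  case: ifP => [Lft|/negbT nLft]; first exact/has_right_sub/transfer_in.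
  have Sc : c \in row_single R by rewrite in_row_single nRgt nLft.
  by have := col_reflect_in Sc; rewrite in_row_single => /and3P[].
rewrite {2}/mm_perm; case: ifP => [Rgt|/negbT nRgt].
  have Lc := transfer_in eRL Rgt.
  by rewrite /mm_perm (disjointFl RL Lc) Lc transferK.
case: ifP => [Lft|/negbT nLft].
  by rewrite /mm_perm transfer_in ?transferK.
have Sc : c \in row_single R by rewrite in_row_single nRgt nLft.
have := col_reflect_in Sc; rewrite in_row_single => /and3P[nR nL _].
by rewrite /mm_perm (negPf nR) (negPf nL) col_reflectK.
Qed.

Variables (key1 key2 : letter k -> nat) (a b : letter k).
Hypotheses (swap : adj_swap key1 key2 a b) (a_marked : ~~ a.2) (b_marked : ~~ b.2).

Let lt_ab : key1 a < key1 b. Proof. by case: swap => ->. Qed.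
Let a_ne_b : a != b. Proof. by apply: contraTneq lt_ab => ->; rewrite ltnn. Qed.

Definition mm (t : filling) : filling := relabel (region a b t) (mm_perm (region a b t)) t.

Section Source.
Variable t : filling.
Hypothesis t_tab : is_tableau key1 t.
Local Notation R := (region a b t).

Let R_ab c : c \in R -> (t c == a) || (t c == b). Proof. by rewrite regionE. Qed.

Lemma mm_src_right c : c \in has_right R -> t c = a.
Proof. exact: (forced_has_right t_tab lt_ab R_ab b_marked). Qed.

Lemma mm_src_left c : c \in has_left R -> t c = b.
Proof. exact: (forced_has_left t_tab lt_ab R_ab a_marked). Qed.

Lemma mm_src_right_left : [disjoint has_right R & has_left R].
Proof.
rewrite disjoint_subset; apply/subsetP => c /mm_src_right tc; rewrite inE.
by apply: contraNN a_ne_b => /mm_src_left; rewrite tc => ->.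
Qed.

Lemma single_above_right c d : c \in row_single R -> d \in has_right R ->
  col c = col d -> row c < row d -> False.
Proof.
rewrite in_row_single => /and3P[nRc _ Rc] Rd eq_c lt_r.
have [w [Rw eq_rw lt_cw]] := has_rightE Rd.
have le_r : row c <= row w by rewrite eq_rw ltnW.
have le_c : col c <= col w by rewrite eq_c ltnW.
have [z [Rz rz cz]] := region_corner_ur swap lam_part t_tab Rc Rw le_r le_c.
by move/negP: nRc; apply; apply: (has_rightI Rc Rz rz); rewrite cz eq_c.
Qed.

Lemma left_above_single c d : c \in has_left R -> d \in row_single R ->
  col c = col d -> row c < row d -> False.
Proof.
move=> Lc; rewrite in_row_single => /and3P[_ nLd Rd] eq_c lt_r.
have [w [Rw eq_rw lt_wc]] := has_leftE Lc.
have le_r : row w <= row d by rewrite eq_rw ltnW.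
have le_c : col w <= col d by rewrite -eq_c ltnW.
have [z [Rz rz cz]] := region_corner_ll swap lam_part mu_part t_tab Rw Rd le_r le_c.
by move/negP: nLd; apply; apply: (has_leftI Rd Rz rz); rewrite cz -eq_c.
Qed.

Let mm_perm_in := (mm_perm_spec mm_src_right_left).1.
Let mm_permK := (mm_perm_spec mm_src_right_left).2.

Lemma mm_region : region a b (mm t) = R.
Proof. exact: region_relabel. Qed.

Lemma mmK : mm (mm t) = t.
Proof. by rewrite {1}/mm mm_region; apply: relabelK. Qed.

Lemma card_mm x : #|[set c | mm t c == x]| = #|[set c | t c == x]|.
Proof. exact: (card_relabel mm_perm_in mm_perm_in mm_permK mm_permK). Qed.

Lemma mm_right c : c \in has_right R -> mm t c = b.
Proof.
move=> Rgt; rewrite relabel_in ?(has_right_sub Rgt) // /mm_perm Rgt.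
by apply/mm_src_left/transfer_in; rewrite ?card_has_right_left.
Qed.

Lemma mm_left c : c \in has_left R -> mm t c = a.
Proof.
move=> Lft; rewrite relabel_in ?(has_left_sub Lft) // /mm_perm.
rewrite (disjointFl mm_src_right_left Lft) Lft.
by apply/mm_src_right/transfer_in; rewrite ?card_has_right_left.
Qed.

Lemma mm_single c : c \in row_single R -> mm t c = t (col_reflect (row_single R) c).
Proof.
rewrite in_row_single => /and3P[nRgt nLft Rc].
by rewrite relabel_in // /mm_perm (negPf nRgt) (negPf nLft).
Qed.

Lemma mm_col c d : c \in R -> d \in R -> col c = col d -> row c < row d ->
  mm t d = b -> mm t c = b.
Proof.
move=> Rc Rd eq_c lt_r md.
have nLd : d \notin has_left R.
  by apply/negP => /mm_left; rewrite md => eq_ba; move: a_ne_b; rewrite eq_ba eqxx.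
have [Rgt|nRc] := boolP (c \in has_right R); first exact: mm_right.
have [dR|nRd] := boolP (d \in has_right R).
  have [Lc|nLc] := boolP (c \in has_left R).
    have := tab_col_le t_tab eq_c (ltnW lt_r).
    by rewrite (mm_src_left Lc) (mm_src_right dR) leqNgt lt_ab.
  have Sc : c \in row_single R by rewrite in_row_single nRc nLc.
  by case: (single_above_right Sc dR eq_c lt_r).
have [Lc|nLc] := boolP (c \in has_left R).
  have Sd : d \in row_single R by rewrite in_row_single nRd nLd.
  by case: (left_above_single Lc Sd eq_c lt_r).
have Sc : c \in row_single R by rewrite in_row_single nRc nLc.
have Sd : d \in row_single R by rewrite in_row_single nRd nLd.
move: md; rewrite !mm_single // => td'.
have eq_c' : col (col_reflect (row_single R) d) = col (col_reflect (row_single R) c).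
  by rewrite !col_reflect_col.
have := tab_col_le t_tab eq_c' (ltnW (col_reflect_rev Sc Sd eq_c lt_r)); rewrite td'.
have : col_reflect (row_single R) c \in R.
  by have := col_reflect_in Sc; rewrite in_row_single => /and3P[].
by rewrite regionE => /orP[] /eqP -> //; rewrite leqNgt lt_ab.
Qed.

Lemma mm_tab : is_tableau key2 (mm t).
Proof.
have mm_ab c : c \in R -> (mm t c == a) || (mm t c == b).
  by move=> Rc; rewrite relabel_in // -regionE mm_perm_in.
have le_ba : key2 b <= key2 a by case: swap => key1_b _ -> -> _; rewrite key1_b.
apply: (swap_tab swap t_tab) => [c|//|c d Rc Rd eq_r lt_c|c d Rc Rd eq_c lt_r].
- by rewrite inE => nRc; rewrite relabel_out.
- rewrite (mm_right (has_rightI Rc Rd (esym eq_r) lt_c)) (mm_left (has_leftI Rd Rc eq_r lt_c)).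
  by split=> // /eqP; rewrite eq_sym (negPf a_ne_b).
- split; last by case/orP: (mm_ab c Rc) => /eqP ->.
  have [/eqP md|/eqP md] := orP (mm_ab d Rd).
    by rewrite md; case/orP: (mm_ab c Rc) => /eqP ->; rewrite ?leqnn.
  by rewrite md (mm_col Rc Rd eq_c lt_r md).
Qed.

End Source.

End MarkedMarkedSwap.

Section AdjacentSwapBijection.
Variables (lam mu : seq nat) (k : nat).
Hypotheses (lam_part : is_partition lam) (mu_part : is_partition mu).

Lemma mm_sym (a b : letter k) : @mm lam mu k b a =1 mm a b.
Proof. by move=> t; rewrite /mm region_sym. Qed.

Lemma weight_bij_adj_swap key1 key2 (a b : letter k) :
  adj_swap key1 key2 a b -> ~~ b.2 -> weight_bij lam mu key1 key2.
Proof.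
move=> swap b_marked; have [a_unmarked|a_marked] := boolP a.2.
  exact: (weight_bij_um lam_part mu_part swap a_unmarked b_marked).
have swap' := adj_swap_sym swap.
apply: (weight_bij_of_maps (F := mm a b) (G := mm a b)) => [t|s|t|s|t x] tab.
- exact: (mm_tab lam_part mu_part swap a_marked b_marked tab).
- by rewrite -mm_sym; exact: (mm_tab lam_part mu_part swap' b_marked a_marked tab).
- exact: (mmK swap a_marked b_marked tab).
- by rewrite -[mm a b s]mm_sym -mm_sym; exact: (mmK swap' b_marked a_marked tab).
- exact: (card_mm swap a_marked b_marked tab).
Qed.

End AdjacentSwapBijection.

(** * From the primed to the signed order *)

Section StageKeys.
Variable k : nat.

Definition stage_pos (m : nat) (z : letter k) : nat :=
  if z.2 then m + z.1 else m - z.1.+1.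

(* In [stage_key m p] the letters 1, ..., m come first, in the signed order
   \bar m < ... < \bar 1 < 1 < ... < m, at the positions 0, ..., 2m except p, where
   (m+1)' sits; all larger letters follow in the primed order.  Letter (i, u) stands
   for i+1, so [stage_pos] and the comparisons with [m] are shifted by one. *)
Definition stage_key (m p : nat) (z : letter k) : nat :=
  if z.1 < m then (if p <= stage_pos m z then (stage_pos m z).+1 else stage_pos m z)
  else if z.2 then (2 * z.1).+1 else if z.1 == m :> nat then p else 2 * z.1.

Lemma stage_pos_inj m (z z' : letter k) :
  z.1 < m -> z'.1 < m -> stage_pos m z = stage_pos m z' -> z = z'.
Proof.
case: z z' => [[i lt_i] u] [[j lt_j] v]; rewrite /stage_pos /= => lt_im lt_jm eq_pos.
have eq_uv : u = v by case: u v eq_pos => [] [] //; lia.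
have eq_ij : i = j by subst v; case: u eq_pos; lia.
by subst; congr pair; apply: val_inj.
Qed.

Lemma stage_pos_onto m q : m <= k -> q < 2 * m ->
  exists a : letter k, a.1 < m /\ stage_pos m a = q.
Proof.
move=> le_mk lt_q; have [lt_qm|le_mq] := ltnP q m.
  have lt_a : m - q.+1 < k by lia.
  by exists (Ordinal lt_a, false); rewrite /stage_pos /=; lia.
have lt_a : q - m < k by lia.
by exists (Ordinal lt_a, true); rewrite /stage_pos /=; lia.
Qed.

Lemma stage_key_primed : stage_key 0 0 =1 @primed_key k.
Proof.
by case=> [[i lt_i] u]; rewrite /stage_key /primed_key /=; case: u; repeat case: ifP; lia.
Qed.

Lemma stage_key_signed : stage_key k (2 * k) =1 @signed_key k.
Proof.
case=> [[i lt_i] u]; rewrite /stage_key /signed_key /stage_pos /=.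
by case: u; repeat case: ifP; lia.
Qed.

Lemma stage_key_next m : stage_key m 0 =1 stage_key m.+1 (2 * m.+1).
Proof.
case=> [[i lt_i] u]; rewrite /stage_key /stage_pos /=.
by case: u; repeat case: ifP; lia.
Qed.

Lemma stage_key_adj_swap m q (a : letter k) (lt_mk : m < k) :
  q < 2 * m -> a.1 < m -> stage_pos m a = q ->
  adj_swap (stage_key m q.+1) (stage_key m q) a (Ordinal lt_mk, false).
Proof.
move=> lt_q lt_a pos_a; set b : letter k := (Ordinal lt_mk, false).
have key_a1 : stage_key m q.+1 a = q by rewrite /stage_key lt_a pos_a ltnn.
have key_a2 : stage_key m q a = q.+1 by rewrite /stage_key lt_a pos_a leqnn.
have key_b1 : stage_key m q.+1 b = q.+1 by rewrite /stage_key /= ltnn eqxx.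
have key_b2 : stage_key m q b = q by rewrite /stage_key /= ltnn eqxx.
have other z : z != a -> z != b -> stage_key m q z = stage_key m q.+1 z /\
    (stage_key m q.+1 z < q) || (q.+1 < stage_key m q.+1 z).
  case: z => [[i lt_i] u] za zb; rewrite /stage_key /=.
  have [lt_im|le_mi] := ltnP i m.
    have : stage_pos m (Ordinal lt_i, u) != q.
      apply: contraNneq za => pos_z; apply/eqP.
      by apply: (stage_pos_inj (z := (Ordinal lt_i, u)) lt_im lt_a); rewrite pos_z pos_a.
    set p := stage_pos m _ => ne_pq.
    by repeat case: ifP; lia.
  case: u za zb => za zb; first by lia.
  have ne_im : i != m.
    by apply: contraNneq zb => eq_im; apply/eqP; rewrite /b; congr pair; exact: val_inj.
  by rewrite (negPf ne_im); lia.
split=> [|z za zb|||z za zb]; rewrite ?key_a1 ?key_a2 ?key_b1 ?key_b2 //.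
  by case: (other z za zb).
by case: (other z za zb).
Qed.

End StageKeys.

Section StageChain.
Variables (lam mu : seq nat) (k : nat).
Hypotheses (lam_part : is_partition lam) (mu_part : is_partition mu).
Local Notation weight_bij := (@weight_bij lam mu k).

Lemma weight_bij_stage_step m q : m < k -> q < 2 * m ->
  weight_bij (stage_key m q.+1) (stage_key m q).
Proof.
move=> lt_mk lt_q; have [a [lt_a pos_a]] := stage_pos_onto (ltnW lt_mk) lt_q.
exact: (weight_bij_adj_swap lam_part mu_part (stage_key_adj_swap lt_mk lt_q lt_a pos_a)).
Qed.

Lemma weight_bij_stage m q : m < k -> q <= 2 * m -> weight_bij (stage_key m q) (stage_key m 0).
Proof.
move=> lt_mk; elim: q => [|q IHq] le_q; first exact: weight_bij_eq.
exact: weight_bij_trans (weight_bij_stage_step lt_mk le_q) (IHq (ltnW le_q)).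
Qed.

Lemma weight_bij_stages m : m <= k -> weight_bij (stage_key 0 0) (stage_key m (2 * m)).
Proof.
elim: m => [|m IHm] le_m; first exact: weight_bij_eq.
apply: weight_bij_trans (IHm (ltnW le_m)) (weight_bij_trans (weight_bij_stage le_m (leqnn _)) _).
exact/weight_bij_eq/stage_key_next.
Qed.

End StageChain.

Theorem corollary4p2 (lam mu : seq nat) (k : nat) :
  is_partition lam -> is_partition mu -> subpart mu lam ->
  exists f : primed_tab lam mu k -> signed_tab lam mu k,
    bijective f /\ forall t, dweight (val (f t)) = dweight (val t).
Proof.
move=> lam_part mu_part _.
have from_primed : weight_bij lam mu (@primed_key k) (stage_key 0 0).
  by apply: weight_bij_eq => z; rewrite stage_key_primed.
have to_signed : weight_bij lam mu (stage_key k (2 * k)) (@signed_key k).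
  exact/weight_bij_eq/stage_key_signed.
have stages := weight_bij_stages lam_part mu_part (leqnn k).
exact: weight_bij_trans from_primed (weight_bij_trans stages to_signed).
Qed.
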